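(* Let $\nu>0$, $C_0,C_1>0$, and let $f_i:[0,1]\to[0,1]$, $i\in\mathbb N$, be orientation-preserving $C^{2+\nu}$ diffeomorphisms with $f_i(0)=0$, $f_i(1)=1$, $|n_{f_i}(x)-n_{f_i}(y)|\le C_0|x-y|^\nu$ for all $x,y\in[0,1]$, and $\sup_{[0,1]}|n_{f_i}|\le C_1$, for all $i$. Then for every $C_2>0$ there exists $C_3>0$ such that the following holds: for every $n$ and every choice of intervals $[a_i,b_i]\subset[0,1]$, $1\le i\le n$, with $\delta_i=b_i-a_i>0$ and $\sum_{i=1}^n\delta_i\le C_2$, $$d_{C^2}\big(\tilde f_1^n,M_1^n\big)\le C_3\big(\max_{1\le j\le n}\delta_j\big)^\nu,$$ where $\tilde f_i=\mathcal Z_{[a_i,b_i]}(f_i)$, $M_i=M_{N_{\tilde f_i}}$, $\tilde f_1^n=\tilde f_n\circ\cdots\circ\tilde f_1$ and $M_1^n=M_n\circ\cdots\circ M_1$.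
   Context: For a $C^2$ orientation-preserving diffeomorphism $g$ of an interval, its nonlinearity is $n_g=D^2g/Dg$; for $g$ defined on $[0,1]$, $N_g=\int_0^1 n_g(x)\,dx$. Zoom: for an interval $H$ and a diffeomorphism $g$ on $H$, $\mathcal Z_H(g)=A_1\circ g\circ A_2:[0,1]\to[0,1]$, where $A_2$ is the orientation-preserving affine map sending $[0,1]$ onto $H$ and $A_1$ the orientation-preserving affine map sending $g(H)$ onto $[0,1]$. For $N\in\mathbb R$, $M_N(x)=\dfrac{xe^{-N/2}}{1+x(e^{-N/2}-1)}$ on $[0,1]$. $d_{C^2}(f,g)=\sum_{i=0}^2\sup_{x\in[0,1]}|D^if(x)-D^ig(x)|$. *)

From Stdlib Require Import Reals Lra.
Open Scope R_scope.

(* t^nu for t >= 0, with the convention 0^nu = 0 (Stdlib's Rpower 0 nu = 1). *)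
Definition hpow (t nu : R) : R := if Rle_dec t 0 then 0 else Rpower t nu.

Definition deriv01 (f f' : R -> R) : Prop :=
  forall x, 0 <= x <= 1 ->
    limit1_in (fun y => (f y - f x) / (y - x))
              (fun y => 0 <= y <= 1 /\ y <> x) (f' x) x.

(* nonlinearity n_g = D^2 g / D g, given Dg = g1 and D^2 g = g2 *)
Definition nonlin (g1 g2 : R -> R) : R -> R := fun x => g2 x / g1 x.

(* Zoom of an orientation-preserving g on H = [a,b]:
   A1 o g o A2 with A2(x) = a + (b-a) x and A1 the increasing affine map
   sending g(H) = [g a, g b] onto [0,1]. *)
Definition A2 (a b : R) (x : R) : R := a + (b - a) * x.
Definition A1 (ga gb : R) (y : R) : R := (y - ga) / (gb - ga).
Definition zoom (a b : R) (g : R -> R) : R -> R :=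
  fun x => A1 (g a) (g b) (g (A2 a b x)).

Definition Mob (N : R) (x : R) : R :=
  x * exp (- N / 2) / (1 + x * (exp (- N / 2) - 1)).

Fixpoint iter_comp (g : nat -> R -> R) (n : nat) : R -> R :=
  match n with
  | O => fun x => x
  | S k => fun x => g (S k) (iter_comp g k x)
  end.

(* max_{1<=j<=n} d j  (for n >= 1 and positive d) *)
Fixpoint maxseq (d : nat -> R) (n : nat) : R :=
  match n with
  | O => 0
  | S k => Rmax (maxseq d k) (d (S k))
  end.

Definition sup01 (h : R -> R) (s : R) : Prop :=
  is_lub (fun y => exists x, 0 <= x <= 1 /\ y = Rabs (h x)) s.

(* d_{C^2}(F,G) = d, where F1,F2 (resp. G1,G2) are the first and second
   derivatives of F (resp. G) on [0,1]. *)
Definition dC2 (F F1 F2 G G1 G2 : R -> R) (d : R) : Prop :=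
  exists s0 s1 s2,
    sup01 (fun x => F x - G x) s0 /\
    sup01 (fun x => F1 x - G1 x) s1 /\
    sup01 (fun x => F2 x - G2 x) s2 /\
    d = s0 + s1 + s2.

(* The key tool is the nonlinearity n_g = g''/g', which is additive along
   compositions, n_{h o g} = (n_h o g) g' + n_g, and which controls an
   increasing diffeomorphism of [0,1] fixing 0 and 1 in the C^2 topology (its
   derivative equals 1 somewhere, and (ln g')' = n_g). *)

From Pilot Require Import Defs.
From Stdlib Require Import Reals Lra Psatz.
From Coquelicot Require Import Coquelicot.
Open Scope R_scope.

Definition I01 (x : R) : Prop := 0 <= x <= 1.

Lemma exp_le x y : x <= y -> exp x <= exp y.
Proof. intros [H | ->]; [left; apply exp_increasing; auto | lra]. Qed.

Definition derive_on (S : R -> Prop) (f f' : R -> R) : Prop :=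
  forall x, S x -> forall eps, 0 < eps -> exists eta, 0 < eta /\
    forall y, S y -> Rabs (y - x) < eta ->
      Rabs (f y - f x - f' x * (y - x)) <= eps * Rabs (y - x).

Lemma remainder_of_quotient f x y l eps :
  (y <> x -> Rabs ((f y - f x) / (y - x) - l) < eps) ->
  Rabs (f y - f x - l * (y - x)) <= eps * Rabs (y - x).
Proof.
  intros Hq. destruct (Req_dec y x) as [->|Hne].
  - replace (f x - f x - l * (x - x)) with 0 by ring.
    rewrite Rminus_diag, !Rabs_R0; lra.
  - replace (f y - f x - l * (y - x)) with (((f y - f x) / (y - x) - l) * (y - x))
      by (field; lra).
    rewrite Rabs_mult. apply Rmult_le_compat_r; [apply Rabs_pos | left; auto].
Qed.

Lemma deriv01_derive_on f f' : deriv01 f f' -> derive_on I01 f f'.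
Proof.
  intros H x Hx eps He.
  destruct (H x Hx eps He) as [eta [Heta Hl]].
  exists eta; split; auto. intros y Hy Hyx.
  apply remainder_of_quotient. intros Hne. exact (Hl y (conj (conj Hy Hne) Hyx)).
Qed.

Lemma derive_on_of_pt_lim S f f' :
  (forall x, S x -> derivable_pt_lim f x (f' x)) -> derive_on S f f'.
Proof.
  intros H x Hx eps He.
  destruct (H x Hx eps He) as [[eta Heta] Hl]. simpl in Hl.
  exists eta; split; auto. intros y Hy Hyx.
  apply remainder_of_quotient. intros Hne.
  assert (Hq := Hl (y - x) ltac:(lra) Hyx).
  replace (x + (y - x)) with y in Hq by ring. exact Hq.
Qed.

Lemma derive_on_ext S f g f' g' : derive_on S f f' ->
  (forall x, S x -> f x = g x) -> (forall x, S x -> f' x = g' x) ->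
  derive_on S g g'.
Proof.
  intros H Hfg Hd x Hx eps He. destruct (H x Hx eps He) as [eta [Heta Hl]].
  exists eta; split; auto. intros y Hy Hyx.
  rewrite <- (Hfg y Hy), <- (Hfg x Hx), <- (Hd x Hx). auto.
Qed.

Lemma increment_le f f' x y m : m <= 1 ->
  Rabs (f y - f x - f' x * (y - x)) <= m * Rabs (y - x) ->
  Rabs (f y - f x) <= (Rabs (f' x) + 1) * Rabs (y - x).
Proof.
  intros Hm Hr.
  replace (f y - f x) with ((f y - f x - f' x * (y - x)) + f' x * (y - x)) by ring.
  eapply Rle_trans; [apply Rabs_triang |]. rewrite Rabs_mult.
  pose proof (Rabs_pos (y - x)). nra.
Qed.

Lemma derive_on_continuous S f f' : derive_on S f f' ->
  forall x, S x -> forall eps, 0 < eps -> exists eta, 0 < eta /\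
    forall y, S y -> Rabs (y - x) < eta -> Rabs (f y - f x) <= eps.
Proof.
  intros H x Hx eps He.
  destruct (H x Hx 1 ltac:(lra)) as [eta [Heta Hl]].
  set (c := Rabs (f' x) + 1).
  assert (Hc : 0 < c) by (unfold c; pose proof (Rabs_pos (f' x)); lra).
  exists (Rmin eta (eps / c)). split.
  { apply Rmin_pos; auto. apply Rdiv_lt_0_compat; auto. }
  intros y Hy Hyx.
  assert (H1 : Rabs (y - x) < eta) by (eapply Rlt_le_trans; [exact Hyx | apply Rmin_l]).
  assert (H2 : Rabs (y - x) * c <= eps).
  { apply Rmult_le_reg_r with (/ c); [apply Rinv_0_lt_compat; auto |].
    rewrite Rmult_assoc, Rinv_r by lra.
    pose proof (Rmin_r eta (eps / c)). unfold Rdiv in *. lra. }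
  eapply Rle_trans; [apply (increment_le f f' x y 1 ltac:(lra) (Hl y Hy H1)) |].
  fold c. lra.
Qed.

Lemma derive_on_comp S T g g' h h' : derive_on S g g' -> derive_on T h h' ->
  (forall x, S x -> T (g x)) ->
  derive_on S (fun x => h (g x)) (fun x => h' (g x) * g' x).
Proof.
  intros Hg Hh HST x Hx eps He.
  set (u := g x). set (a := Rabs (g' x)). set (b := Rabs (h' u)).
  assert (Ha : 0 <= a) by apply Rabs_pos. assert (Hb : 0 <= b) by apply Rabs_pos.
  destruct (Hh u (HST x Hx) (eps / (2 * (a + 1)))) as [e1 [He1 Hh1]].
  { apply Rdiv_lt_0_compat; lra. }
  destruct (Hg x Hx (Rmin 1 (eps / (2 * (b + 1))))) as [e2 [He2 Hg1]].
  { apply Rmin_pos; [lra |]. apply Rdiv_lt_0_compat; lra. }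
  exists (Rmin e2 (e1 / (a + 1))). split.
  { apply Rmin_pos; auto. apply Rdiv_lt_0_compat; lra. }
  intros y Hy Hyx.
  assert (Hy2 : Rabs (y - x) < e2) by (eapply Rlt_le_trans; [exact Hyx | apply Rmin_l]).
  assert (Hy1 : Rabs (y - x) < e1 / (a + 1)) by (eapply Rlt_le_trans; [exact Hyx | apply Rmin_r]).
  specialize (Hg1 y Hy Hy2).
  set (r := Rabs (y - x)) in *. assert (Hr : 0 <= r) by apply Rabs_pos.
  set (m := Rmin 1 (eps / (2 * (b + 1)))) in *.
  assert (Hm1 : m <= 1) by apply Rmin_l.
  assert (Hm2 : m <= eps / (2 * (b + 1))) by apply Rmin_r.
  assert (Hgu : Rabs (g y - u) <= (a + 1) * r) by exact (increment_le g g' x y m Hm1 Hg1).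
  assert (Hgu2 : Rabs (g y - u) < e1).
  { apply Rmult_lt_compat_l with (r := a + 1) in Hy1; [| lra].
    replace ((a + 1) * (e1 / (a + 1))) with e1 in Hy1 by (field; lra). lra. }
  specialize (Hh1 (g y) (HST y Hy) Hgu2).
  change (Rabs (h (g y) - h u - h' u * g' x * (y - x)) <= eps * r).
  replace (h (g y) - h u - h' u * g' x * (y - x)) with
     ((h (g y) - h u - h' u * (g y - u)) + h' u * (g y - g x - g' x * (y - x)))
    by (unfold u; ring).
  eapply Rle_trans; [apply Rabs_triang |]. rewrite Rabs_mult. fold b.
  assert (E1 : eps / (2 * (a + 1)) * Rabs (g y - u) <= eps / 2 * r).
  { replace (eps / 2 * r) with (eps / (2 * (a + 1)) * ((a + 1) * r)) by (field; lra).
    apply Rmult_le_compat_l; auto. left; apply Rdiv_lt_0_compat; lra. }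
  assert (E2 : b * m <= eps / 2).
  { apply Rle_trans with (b * (eps / (2 * (b + 1)))); [apply Rmult_le_compat_l; auto |].
    replace (b * (eps / (2 * (b + 1)))) with (eps / 2 * (b / (b + 1))) by (field; lra).
    assert (b / (b + 1) <= 1).
    { apply Rmult_le_reg_r with (b + 1); [lra |].
      unfold Rdiv; rewrite Rmult_assoc, Rinv_l; lra. }
    nra. }
  assert (E3 : b * Rabs (g y - g x - g' x * (y - x)) <= b * (m * r))
    by (apply Rmult_le_compat_l; auto).
  nra.
Qed.

Lemma derive_on_plus S f f' g g' : derive_on S f f' -> derive_on S g g' ->
  derive_on S (fun x => f x + g x) (fun x => f' x + g' x).
Proof.
  intros Hf Hg x Hx eps He.
  destruct (Hf x Hx (eps / 2) ltac:(lra)) as [e1 [He1 H1]].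
  destruct (Hg x Hx (eps / 2) ltac:(lra)) as [e2 [He2 H2]].
  exists (Rmin e1 e2); split; [apply Rmin_pos; auto |].
  intros y Hy Hyx.
  specialize (H1 y Hy ltac:(eapply Rlt_le_trans; [exact Hyx | apply Rmin_l])).
  specialize (H2 y Hy ltac:(eapply Rlt_le_trans; [exact Hyx | apply Rmin_r])).
  replace (f y + g y - (f x + g x) - (f' x + g' x) * (y - x)) with
    ((f y - f x - f' x * (y - x)) + (g y - g x - g' x * (y - x))) by ring.
  eapply Rle_trans; [apply Rabs_triang | lra].
Qed.

Lemma derive_on_global S (h h' : R -> R) :
  (forall x, is_derive h x (h' x)) -> derive_on S h h'.
Proof. intros H. apply derive_on_of_pt_lim. intros x _. apply is_derive_Reals, H. Qed.

Lemma derive_on_const S c : derive_on S (fun _ => c) (fun _ => 0).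
Proof. apply derive_on_global. intros; auto_derive; auto. Qed.

Lemma derive_on_scal S f f' c : derive_on S f f' ->
  derive_on S (fun x => c * f x) (fun x => c * f' x).
Proof.
  intros Hf. eapply derive_on_ext.
  - apply (derive_on_comp S (fun _ => True) f f' (fun y => c * y) (fun _ => c)); auto.
    apply derive_on_global. intros; auto_derive; auto; ring.
  - auto.
  - auto.
Qed.

Lemma derive_on_minus S f f' g g' : derive_on S f f' -> derive_on S g g' ->
  derive_on S (fun x => f x - g x) (fun x => f' x - g' x).
Proof.
  intros Hf Hg. eapply derive_on_ext.
  - apply (derive_on_plus _ _ _ _ _ Hf (derive_on_scal _ _ _ (-1) Hg)).
  - intros; simpl; ring.
  - intros; simpl; ring.
Qed.

Lemma derive_on_square S f f' : derive_on S f f' ->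
  derive_on S (fun x => f x * f x) (fun x => 2 * f x * f' x).
Proof.
  intros Hf. eapply derive_on_ext.
  - apply (derive_on_comp S (fun _ => True) f f' (fun y => y * y) (fun y => 2 * y)); auto.
    apply derive_on_global. intros; auto_derive; auto; ring.
  - auto.
  - intros; simpl; ring.
Qed.

(* Product rule, by polarization: 4 f g = (f + g)^2 - (f - g)^2. *)
Lemma derive_on_mult S f f' g g' : derive_on S f f' -> derive_on S g g' ->
  derive_on S (fun x => f x * g x) (fun x => f' x * g x + f x * g' x).
Proof.
  intros Hf Hg.
  assert (Hs := derive_on_square S _ _ (derive_on_plus S _ _ _ _ Hf Hg)).
  assert (Hd := derive_on_square S _ _ (derive_on_minus S _ _ _ _ Hf Hg)).
  eapply derive_on_ext.
  - apply (derive_on_minus _ _ _ _ _ (derive_on_scal _ _ _ (/ 4) Hs)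
                                    (derive_on_scal _ _ _ (/ 4) Hd)).
  - intros; simpl; field.
  - intros; simpl; field.
Qed.

Lemma derive_on_ln S g g' : derive_on S g g' -> (forall x, S x -> 0 < g x) ->
  derive_on S (fun x => ln (g x)) (fun x => g' x / g x).
Proof.
  intros Hg Hp. eapply derive_on_ext.
  - apply (derive_on_comp S (fun y => 0 < y) g g' ln (fun y => / y)); auto.
    apply derive_on_of_pt_lim. intros; apply derivable_pt_lim_ln; auto.
  - auto.
  - intros; simpl. unfold Rdiv. ring.
Qed.

(* Derivatives relative to [0,1] are unique: every point of [0,1] is
   approached from within [0,1]. *)
Lemma derive_on_unique f f1 f2 : derive_on I01 f f1 -> derive_on I01 f f2 ->
  forall x, I01 x -> f1 x = f2 x.
Proof.
  intros H1 H2 x Hx.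
  destruct (Req_dec (f1 x) (f2 x)) as [| Hne]; auto. exfalso.
  set (d := Rabs (f1 x - f2 x)).
  assert (Hd : 0 < d) by (apply Rabs_pos_lt; lra).
  destruct (H1 x Hx (d / 4) ltac:(lra)) as [e1 [He1 K1]].
  destruct (H2 x Hx (d / 4) ltac:(lra)) as [e2 [He2 K2]].
  set (s := Rmin (Rmin e1 e2) 1 / 2).
  pose proof (Rmin_l (Rmin e1 e2) 1). pose proof (Rmin_r (Rmin e1 e2) 1).
  pose proof (Rmin_l e1 e2). pose proof (Rmin_r e1 e2).
  assert (Hs0 : 0 < s) by (unfold s; apply Rdiv_lt_0_compat; [repeat apply Rmin_pos |]; lra).
  assert (Hy : exists y, I01 y /\ Rabs (y - x) = s).
  { unfold I01 in *. destruct (Rle_dec x (1 / 2)).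
    - exists (x + s). split; [unfold s in *; lra |].
      replace (x + s - x) with s by ring. apply Rabs_pos_eq; lra.
    - exists (x - s). split; [unfold s in *; lra |].
      replace (x - s - x) with (- s) by ring. rewrite Rabs_Ropp. apply Rabs_pos_eq; lra. }
  destruct Hy as [y [Hy Hys]].
  specialize (K1 y Hy ltac:(unfold s in *; lra)). specialize (K2 y Hy ltac:(unfold s in *; lra)).
  assert (Habs : Rabs ((f1 x - f2 x) * (y - x)) <= d / 2 * s).
  { replace ((f1 x - f2 x) * (y - x)) with
      (- (f y - f x - f1 x * (y - x)) + (f y - f x - f2 x * (y - x))) by ring.
    eapply Rle_trans; [apply Rabs_triang |]. rewrite Rabs_Ropp, <- Hys. lra. }
  rewrite Rabs_mult, Hys in Habs. fold d in Habs. nra.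
Qed.

(* Clamping to [0,1], used to extend a function on [0,1] to all of R. *)
Definition clamp01 (t : R) : R := Rmax 0 (Rmin 1 t).

Lemma clamp01_I01 t : I01 (clamp01 t).
Proof. unfold clamp01, I01, Rmax, Rmin. repeat destruct Rle_dec; lra. Qed.

Lemma clamp01_id t : I01 t -> clamp01 t = t.
Proof. unfold clamp01, I01, Rmax, Rmin. intros; repeat destruct Rle_dec; lra. Qed.

Lemma clamp01_contract t s : I01 s -> Rabs (clamp01 t - s) <= Rabs (t - s).
Proof.
  unfold clamp01, I01, Rmax, Rmin. intros.
  repeat destruct Rle_dec; unfold Rabs; repeat destruct Rcase_abs; lra.
Qed.

(* Mean value theorem on [0,1], via Stdlib's [MVT_gen] applied to f o clamp01. *)
Lemma MVT01 f f' x y : derive_on I01 f f' -> I01 x -> I01 y -> x < y ->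
  exists c, x <= c <= y /\ f y - f x = f' c * (y - x).
Proof.
  intros Hf Hx Hy Hxy. unfold I01 in *.
  destruct (MVT_gen (fun t => f (clamp01 t)) x y f') as [c [Hc Heq]].
  - intros c Hc. rewrite Rmin_left, Rmax_right in Hc by lra.
    apply is_derive_Reals. intros eps He.
    destruct (Hf c ltac:(unfold I01; lra) (eps / 2) ltac:(lra)) as [e [He' K]].
    assert (Hpos : 0 < Rmin e (Rmin c (1 - c))) by (repeat apply Rmin_pos; lra).
    exists (mkposreal _ Hpos). simpl. intros t Ht0 Ht.
    pose proof (Rmin_l e (Rmin c (1 - c))). pose proof (Rmin_r e (Rmin c (1 - c))).
    pose proof (Rmin_l c (1 - c)). pose proof (Rmin_r c (1 - c)).
    assert (Hct : I01 (c + t)) by (unfold I01, Rabs in *; destruct Rcase_abs; lra).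
    rewrite (clamp01_id (c + t) Hct), (clamp01_id c ltac:(unfold I01; lra)).
    specialize (K (c + t) Hct ltac:(replace (c + t - c) with t by ring; lra)).
    replace (c + t - c) with t in K by ring.
    replace ((f (c + t) - f c) / t - f' c) with ((f (c + t) - f c - f' c * t) / t)
      by (field; auto).
    unfold Rdiv. rewrite Rabs_mult, Rabs_inv.
    apply Rle_lt_trans with (eps / 2); [| lra].
    apply Rmult_le_reg_r with (Rabs t); [apply Rabs_pos_lt; auto |].
    rewrite Rmult_assoc, Rinv_l by (apply Rabs_no_R0; auto). lra.
  - intros t Ht. rewrite Rmin_left, Rmax_right in Ht by lra.
    assert (It : I01 t) by (unfold I01; lra).
    intros eps He.
    destruct (derive_on_continuous _ _ _ Hf t It (eps / 2) ltac:(lra)) as [e [He' K]].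
    exists e. split; [lra |]. intros z [_ Hz]. simpl in Hz |- *. unfold Rdist in *.
    rewrite (clamp01_id t It).
    specialize (K (clamp01 z) (clamp01_I01 z)
                  ltac:(eapply Rle_lt_trans; [apply clamp01_contract; auto | auto])).
    lra.
  - rewrite Rmin_left, Rmax_right in Hc by lra.
    exists c. split; auto.
    rewrite <- (clamp01_id x ltac:(unfold I01; lra)), <- (clamp01_id y ltac:(unfold I01; lra)) at 1.
    exact Heq.
Qed.

Lemma MVT01_le f f' M x y : derive_on I01 f f' -> I01 x -> I01 y ->
  (forall c, I01 c -> Rabs (f' c) <= M) -> Rabs (f y - f x) <= M * Rabs (y - x).
Proof.
  intros Hf Hx Hy HM.
  assert (Key : forall u v, I01 u -> I01 v -> u < v -> Rabs (f v - f u) <= M * Rabs (v - u)).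
  { intros u v Hu Hv Huv. destruct (MVT01 f f' u v Hf Hu Hv Huv) as [c [Hc ->]].
    rewrite Rabs_mult. apply Rmult_le_compat_r; [apply Rabs_pos |].
    apply HM. unfold I01 in *; lra. }
  destruct (Rtotal_order x y) as [Hlt | [-> | Hgt]].
  - auto.
  - rewrite !Rminus_diag, !Rabs_R0. lra.
  - rewrite Rabs_minus_sym, (Rabs_minus_sym y x). auto.
Qed.

Lemma increasing01 f f' x y : derive_on I01 f f' -> (forall c, I01 c -> 0 < f' c) ->
  I01 x -> I01 y -> x < y -> f x < f y.
Proof.
  intros Hf Hp Hx Hy Hxy. destruct (MVT01 f f' x y Hf Hx Hy Hxy) as [c [Hc Hq]].
  assert (0 < f' c) by (apply Hp; unfold I01 in *; lra). nra.
Qed.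

Definition unit_diffeo (g g1 g2 : R -> R) : Prop :=
  derive_on I01 g g1 /\ derive_on I01 g1 g2 /\
  (forall x, I01 x -> 0 < g1 x) /\ g 0 = 0 /\ g 1 = 1.

Lemma unit_diffeo_maps g g1 g2 : unit_diffeo g g1 g2 -> forall x, I01 x -> I01 (g x).
Proof.
  intros [Hd [_ [Hp [H0 H1]]]] x Hx. unfold I01 in *. split.
  - destruct (Req_dec x 0) as [-> | Hne]; [lra |].
    rewrite <- H0. left. apply (increasing01 g g1); unfold I01; auto; lra.
  - destruct (Req_dec x 1) as [-> | Hne]; [lra |].
    rewrite <- H1. left. apply (increasing01 g g1); unfold I01; auto; lra.
Qed.

Lemma unit_diffeo_id : unit_diffeo (fun x => x) (fun _ => 1) (fun _ => 0).
Proof.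
  split; [| split; [apply derive_on_const |]].
  - apply derive_on_global. intros; auto_derive; auto.
  - repeat split; intros; lra.
Qed.

Lemma unit_diffeo_comp g g1 g2 h h1 h2 : unit_diffeo g g1 g2 -> unit_diffeo h h1 h2 ->
  unit_diffeo (fun x => h (g x)) (fun x => h1 (g x) * g1 x)
    (fun x => h2 (g x) * g1 x * g1 x + h1 (g x) * g2 x).
Proof.
  intros Hg Hh. assert (Hm := unit_diffeo_maps g g1 g2 Hg).
  destruct Hg as [Dg [Dg1 [Pg [G0 G1]]]]. destruct Hh as [Dh [Dh1 [Ph [H0 H1]]]].
  repeat split.
  - apply (derive_on_comp I01 I01); auto.
  - eapply derive_on_ext.
    + apply (derive_on_mult _ _ _ _ _ (derive_on_comp I01 I01 _ _ _ _ Dg Dh1 Hm) Dg1).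
    + auto.
    + intros; simpl; ring.
  - intros x Hx. apply Rmult_lt_0_compat; auto.
  - rewrite G0; auto.
  - rewrite G1; auto.
Qed.

Fixpoint comp_d1 (h h1 : nat -> R -> R) (k : nat) (x : R) : R :=
  match k with
  | O => 1
  | S k => h1 (S k) (iter_comp h k x) * comp_d1 h h1 k x
  end.

Fixpoint comp_d2 (h h1 h2 : nat -> R -> R) (k : nat) (x : R) : R :=
  match k with
  | O => 0
  | S k => h2 (S k) (iter_comp h k x) * comp_d1 h h1 k x * comp_d1 h h1 k x
           + h1 (S k) (iter_comp h k x) * comp_d2 h h1 h2 k x
  end.

Definition unit_diffeos (h h1 h2 : nat -> R -> R) (n : nat) : Prop :=
  forall i, (1 <= i <= n)%nat -> unit_diffeo (h i) (h1 i) (h2 i).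

Lemma iter_comp_unit_diffeo h h1 h2 n : unit_diffeos h h1 h2 n ->
  forall k, (k <= n)%nat -> unit_diffeo (iter_comp h k) (comp_d1 h h1 k) (comp_d2 h h1 h2 k).
Proof.
  intros Hfam k. induction k as [| k IH]; intros Hk.
  - exact unit_diffeo_id.
  - exact (unit_diffeo_comp _ _ _ _ _ _ (IH ltac:(lia)) (Hfam (S k) ltac:(lia))).
Qed.

Lemma comp_nonlin_succ h h1 h2 k x :
  0 < comp_d1 h h1 k x -> 0 < h1 (S k) (iter_comp h k x) ->
  nonlin (comp_d1 h h1 (S k)) (comp_d2 h h1 h2 (S k)) x =
  nonlin (h1 (S k)) (h2 (S k)) (iter_comp h k x) * comp_d1 h h1 k x
  + nonlin (comp_d1 h h1 k) (comp_d2 h h1 h2 k) x.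
Proof. intros Hd Hh. unfold nonlin; simpl. field. lra. Qed.

Fixpoint psum (d : nat -> R) (k : nat) : R :=
  match k with O => 0 | S k => psum d k + d (S k) end.

(* The link with Stdlib's sums, which start at index 0. *)
Lemma psum_sum_f_R0 d n : psum d (S n) = sum_f_R0 (fun k => d (S k)) n.
Proof. induction n as [| n IH]; [simpl; ring |]. rewrite tech5, <- IH. simpl. ring. Qed.

Lemma psum_scal c d n : psum (fun i => c * d i) n = c * psum d n.
Proof. induction n as [| n IH]; simpl; [ring | rewrite IH; ring]. Qed.

Lemma psum_le d n : (forall i, (1 <= i <= n)%nat -> 0 <= d i) ->
  forall k, (k <= n)%nat -> 0 <= psum d k <= psum d n.
Proof.
  induction n as [| n IH]; intros Hd k Hk.
  - replace k with 0%nat by lia. simpl; lra.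
  - pose proof (Hd (S n) ltac:(lia)).
    assert (Hn : forall k, (k <= n)%nat -> 0 <= psum d k <= psum d n)
      by (intros; apply IH; [intros; apply Hd; lia | lia]).
    destruct (Nat.eq_dec k (S n)) as [-> | Hne].
    + specialize (Hn n (le_n n)). simpl; lra.
    + specialize (Hn k ltac:(lia)). simpl; lra.
Qed.

Section Distortion.

Variables (h h1 h2 : nat -> R -> R) (n : nat) (l : nat -> R).
Hypothesis Hfam : unit_diffeos h h1 h2 n.
Hypothesis Hnl : forall i x, (1 <= i <= n)%nat -> I01 x ->
  Rabs (nonlin (h1 i) (h2 i) x) <= l i.

Lemma nonlin_bound_nonneg i : (1 <= i <= n)%nat -> 0 <= l i.
Proof. intros Hi. eapply Rle_trans; [apply Rabs_pos | apply (Hnl i 0 Hi); unfold I01; lra]. Qed.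

Let psum_nonneg k : (k <= n)%nat -> 0 <= psum l k.
Proof. intros Hk. apply (psum_le l n nonlin_bound_nonneg k Hk). Qed.

(* The logarithm of the derivative oscillates by at most l_1 + ... + l_k,
   since d/dx ln (h_i' o g) = (n_{h_i} o g) * g' with 0 < g' and g([0,1]) in [0,1]. *)
Lemma ln_comp_d1_oscillation k : (k <= n)%nat -> forall x y, I01 x -> I01 y ->
  Rabs (ln (comp_d1 h h1 k x) - ln (comp_d1 h h1 k y)) <= psum l k.
Proof.
  induction k as [| k IH]; intros Hk x y Hx Hy.
  - simpl. rewrite Rminus_diag, Rabs_R0. lra.
  - assert (Hg := iter_comp_unit_diffeo h h1 h2 n Hfam k ltac:(lia)).
    assert (Hm := unit_diffeo_maps _ _ _ Hg).
    destruct Hg as [_ [_ [Hp _]]].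
    destruct (Hfam (S k) ltac:(lia)) as [_ [Dh1 [Ph _]]].
    simpl. rewrite !ln_mult by auto.
    replace (ln (h1 (S k) (iter_comp h k x)) + ln (comp_d1 h h1 k x) -
             (ln (h1 (S k) (iter_comp h k y)) + ln (comp_d1 h h1 k y))) with
      ((ln (h1 (S k) (iter_comp h k x)) - ln (h1 (S k) (iter_comp h k y))) +
       (ln (comp_d1 h h1 k x) - ln (comp_d1 h h1 k y))) by ring.
    eapply Rle_trans; [apply Rabs_triang |].
    assert (E := MVT01_le _ _ (l (S k)) _ _ (derive_on_ln _ _ _ Dh1 Ph) (Hm y Hy) (Hm x Hx)
                   (fun c Hc => Hnl (S k) c ltac:(lia) Hc)).
    assert (Hdist : Rabs (iter_comp h k x - iter_comp h k y) <= 1).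
    { pose proof (Hm x Hx); pose proof (Hm y Hy). unfold I01 in *.
      unfold Rabs; destruct Rcase_abs; lra. }
    pose proof (IH ltac:(lia) x y Hx Hy). pose proof (nonlin_bound_nonneg (S k) ltac:(lia)).
    nra.
Qed.

(* Since the composition fixes 0 and 1, its derivative equals 1 somewhere. *)
Lemma comp_d1_le_exp k : (k <= n)%nat -> forall x, I01 x ->
  comp_d1 h h1 k x <= exp (psum l k).
Proof.
  intros Hk x Hx.
  destruct (iter_comp_unit_diffeo h h1 h2 n Hfam k Hk) as [D1 [_ [Hp [H0 H1]]]].
  destruct (MVT01 _ _ 0 1 D1) as [c [Hc Hq]]; try (unfold I01; lra).
  rewrite H0, H1 in Hq.
  assert (E := ln_comp_d1_oscillation k Hk x c Hx ltac:(unfold I01; lra)).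
  replace (comp_d1 h h1 k c) with 1 in E by lra. rewrite ln_1, Rminus_0_r in E.
  rewrite <- (exp_ln (comp_d1 h h1 k x)) by auto.
  apply exp_le. eapply Rle_trans; [apply RRle_abs | exact E].
Qed.

Lemma comp_nonlin_le k : (k <= n)%nat -> forall x, I01 x ->
  Rabs (nonlin (comp_d1 h h1 k) (comp_d2 h h1 h2 k) x) <= psum l k * exp (psum l k).
Proof.
  induction k as [| k IH]; intros Hk x Hx.
  - unfold nonlin; simpl. replace (0 / 1) with 0 by field. rewrite Rabs_R0. lra.
  - assert (Hg := iter_comp_unit_diffeo h h1 h2 n Hfam k ltac:(lia)).
    assert (Hm := unit_diffeo_maps _ _ _ Hg). destruct Hg as [_ [_ [Hp _]]].
    destruct (Hfam (S k) ltac:(lia)) as [_ [_ [Ph _]]].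
    rewrite comp_nonlin_succ by auto.
    eapply Rle_trans; [apply Rabs_triang |].
    rewrite Rabs_mult, (Rabs_pos_eq (comp_d1 h h1 k x)) by (left; auto).
    assert (Hn1 := Hnl (S k) _ ltac:(lia) (Hm x Hx)).
    assert (Hd1 := comp_d1_le_exp k ltac:(lia) x Hx).
    assert (Hn2 := IH ltac:(lia) x Hx).
    pose proof (psum_nonneg k ltac:(lia)). pose proof (nonlin_bound_nonneg (S k) ltac:(lia)).
    pose proof (Hp x Hx).
    assert (Hexp : exp (psum l k) <= exp (psum l (S k))) by (apply exp_le; simpl; lra).
    pose proof (exp_pos (psum l k)).
    pose proof (Rabs_pos (nonlin (h1 (S k)) (h2 (S k)) (iter_comp h k x))).
    simpl psum in *. nra.
Qed.

End Distortion.

(* On (0, W], |u - v| <= W |ln u - ln v| (exp is W-Lipschitz below ln W). *)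
Lemma diff_le_of_ln_diff u v W : 0 < u -> 0 < v -> u <= W -> v <= W ->
  Rabs (u - v) <= W * Rabs (ln u - ln v).
Proof.
  assert (K : forall u v, 0 < u -> 0 < v -> v <= W -> ln u <= ln v ->
            0 <= v - u <= W * (ln v - ln u)).
  { intros u' v' Hu Hv HvW Hl.
    assert (E := exp_ineq1_le (ln u' - ln v')).
    unfold Rminus in E. rewrite exp_plus, exp_Ropp, !exp_ln in E by auto.
    assert (Huv : u' <= v') by (rewrite <- (exp_ln u'), <- (exp_ln v') by auto; apply exp_le; auto).
    assert (u' * / v' * v' = u') by (field; lra).
    split; [lra |].
    apply Rle_trans with (v' * (ln v' - ln u')); [nra |].
    apply Rmult_le_compat_r; lra. }
  intros Hu Hv HuW HvW.
  destruct (Rle_dec (ln u) (ln v)) as [Hl | Hl].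
  - destruct (K u v Hu Hv HvW Hl).
    rewrite Rabs_minus_sym, (Rabs_minus_sym (ln u)), !Rabs_pos_eq; lra.
  - destruct (K v u Hv Hu HuW ltac:(lra)). rewrite !Rabs_pos_eq; lra.
Qed.

(* If the nonlinearities of two unit diffeomorphisms are uniformly eps-close,
   so are the logarithms of their derivatives (these agree at some point, by
   the mean value theorem applied to P - Q); the derivatives themselves are
   then W eps-close when bounded by W. *)
Lemma d1_close_of_nonlin_close P P1 P2 Q Q1 Q2 W eps :
  unit_diffeo P P1 P2 -> unit_diffeo Q Q1 Q2 ->
  (forall x, I01 x -> P1 x <= W /\ Q1 x <= W) ->
  (forall x, I01 x -> Rabs (nonlin P1 P2 x - nonlin Q1 Q2 x) <= eps) ->
  forall x, I01 x -> Rabs (P1 x - Q1 x) <= W * eps.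
Proof.
  intros [DP [DP1 [PP [P0 P1e]]]] [DQ [DQ1 [PQ [Q0 Q1e]]]] HW Heps x Hx.
  destruct (MVT01 _ _ 0 1 (derive_on_minus _ _ _ _ _ DP DQ)) as [c [Hc Hq]];
    try (unfold I01; lra).
  assert (Ic : I01 c) by (unfold I01; lra).
  assert (Hc1 : P1 c = Q1 c) by (rewrite P0, P1e, Q0, Q1e in Hq; lra).
  assert (E := MVT01_le _ _ eps _ _
                 (derive_on_minus _ _ _ _ _ (derive_on_ln _ _ _ DP1 PP) (derive_on_ln _ _ _ DQ1 PQ))
                 Ic Hx Heps).
  cbv beta in E. rewrite Hc1, Rminus_diag, Rminus_0_r in E.
  assert (Rabs (x - c) <= 1) by (unfold I01 in *; unfold Rabs; destruct Rcase_abs; lra).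
  assert (0 <= eps) by (eapply Rle_trans; [apply Rabs_pos | apply (Heps x Hx)]).
  destruct (HW x Hx). pose proof (PP x Hx). pose proof (PQ x Hx).
  eapply Rle_trans; [apply diff_le_of_ln_diff; eauto |].
  apply Rmult_le_compat_l; [lra |]. nra.
Qed.

Lemma C2_close_of_nonlin_close P P1 P2 Q Q1 Q2 W eps B :
  unit_diffeo P P1 P2 -> unit_diffeo Q Q1 Q2 ->
  (forall x, I01 x -> P1 x <= W /\ Q1 x <= W) ->
  (forall x, I01 x -> Rabs (nonlin P1 P2 x - nonlin Q1 Q2 x) <= eps) ->
  (forall x, I01 x -> Rabs (nonlin Q1 Q2 x) <= B) ->
  forall x, I01 x ->
    Rabs (P x - Q x) <= W * eps /\ Rabs (P1 x - Q1 x) <= W * eps /\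
    Rabs (P2 x - Q2 x) <= (1 + B) * (W * eps).
Proof.
  intros HP HQ HW Heps HB.
  assert (Hd1 := d1_close_of_nonlin_close _ _ _ _ _ _ W eps HP HQ HW Heps).
  destruct HP as [DP [_ [PP [P0 _]]]]. destruct HQ as [DQ [_ [PQ [Q0 _]]]].
  intros x Hx. split; [| split; [auto |]].
  - assert (E := MVT01_le _ _ (W * eps) 0 x (derive_on_minus _ _ _ _ _ DP DQ)
                   ltac:(unfold I01; lra) Hx Hd1).
    cbv beta in E. rewrite P0, Q0, !Rminus_0_r in E.
    assert (Rabs x <= 1) by (unfold I01 in *; unfold Rabs; destruct Rcase_abs; lra).
    assert (0 <= W * eps) by (eapply Rle_trans; [apply Rabs_pos | apply (Hd1 x Hx)]).
    pose proof (Rabs_pos x). nra.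
  - pose proof (PP x Hx). pose proof (PQ x Hx).
    replace (P2 x - Q2 x) with
      ((nonlin P1 P2 x - nonlin Q1 Q2 x) * P1 x + nonlin Q1 Q2 x * (P1 x - Q1 x))
      by (unfold nonlin; field; lra).
    eapply Rle_trans; [apply Rabs_triang |]. rewrite !Rabs_mult.
    rewrite (Rabs_pos_eq (P1 x)) by lra.
    assert (E1 := Heps x Hx). assert (E2 := HB x Hx). assert (E3 := Hd1 x Hx).
    destruct (HW x Hx).
    pose proof (Rabs_pos (nonlin P1 P2 x - nonlin Q1 Q2 x)).
    pose proof (Rabs_pos (nonlin Q1 Q2 x)). pose proof (Rabs_pos (P1 x - Q1 x)).
    assert (Rabs (nonlin P1 P2 x - nonlin Q1 Q2 x) * P1 x <= eps * W)
      by (apply Rmult_le_compat; lra).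
    assert (Rabs (nonlin Q1 Q2 x) * Rabs (P1 x - Q1 x) <= B * (W * eps))
      by (apply Rmult_le_compat; lra).
    lra.
Qed.

Lemma gronwall_step E S c e : 0 <= E -> 0 <= S -> 0 <= c -> 0 <= e ->
  E * exp S * (1 + c) + e <= (E + e) * exp (S + c).
Proof.
  intros HE HS Hc He.
  rewrite exp_plus.
  assert (H1 : 1 + c <= exp c) by apply exp_ineq1_le.
  assert (H2 : 1 <= exp S) by (rewrite <- exp_0; apply exp_le; lra).
  pose proof (exp_pos S).
  assert (E * exp S * (1 + c) <= E * exp S * exp c) by (apply Rmult_le_compat_l; nra).
  assert (H3 : 1 <= exp S * exp c) by nra.
  assert (e <= e * (exp S * exp c)) by (rewrite <- (Rmult_1_r e) at 1; apply Rmult_le_compat_l; lra).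
  nra.
Qed.

(* The increment of the distance between nonlinearities along one more
   composition step, n_{h o g} = (n_h o g) g' + n_g, for two such steps with
   g-derivatives DF, DG <= W. *)
Lemma nonlin_recurrence_bound nF nG DF DG nFk nGk eps e l W :
  0 < DF -> DF <= W -> Rabs (nFk - nGk) <= eps -> Rabs (nF - nG) <= e ->
  Rabs nG <= l -> Rabs (DF - DG) <= W * eps ->
  Rabs (nF * DF + nFk - (nG * DG + nGk)) <= eps * (1 + W * l) + W * e.
Proof.
  intros HDF HW E1 E2 E3 E4.
  replace (nF * DF + nFk - (nG * DG + nGk)) with
    ((nFk - nGk) + (nF - nG) * DF + nG * (DF - DG)) by ring.
  assert (Q1 : Rabs ((nF - nG) * DF) <= e * W).
  { rewrite Rabs_mult, (Rabs_pos_eq DF) by lra.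
    apply Rmult_le_compat; [apply Rabs_pos | lra | auto | auto]. }
  assert (Q2 : Rabs (nG * (DF - DG)) <= l * (W * eps))
    by (rewrite Rabs_mult; apply Rmult_le_compat; auto using Rabs_pos).
  eapply Rle_trans; [apply Rabs_triang |].
  eapply Rle_trans; [apply Rplus_le_compat_r, Rabs_triang |].
  replace (eps * (1 + W * l) + W * e) with (eps + e * W + l * (W * eps)) by ring.
  lra.
Qed.

Section TwoFamilies.

Variables (hF hF1 hF2 hG hG1 hG2 : nat -> R -> R) (n : nat) (l e : nat -> R).
Variables (Lam Sig : R).
Hypothesis HF : unit_diffeos hF hF1 hF2 n.
Hypothesis HG : unit_diffeos hG hG1 hG2 n.
Hypothesis HnlF : forall i x, (1 <= i <= n)%nat -> I01 x ->
  Rabs (nonlin (hF1 i) (hF2 i) x) <= l i.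
Hypothesis HnlG : forall i x, (1 <= i <= n)%nat -> I01 x ->
  Rabs (nonlin (hG1 i) (hG2 i) x) <= l i.
Hypothesis Hcross : forall i u v, (1 <= i <= n)%nat -> I01 u -> I01 v ->
  Rabs (nonlin (hF1 i) (hF2 i) u - nonlin (hG1 i) (hG2 i) v) <= e i.
Hypothesis Hlam : psum l n <= Lam.
Hypothesis Hsig : psum e n <= Sig.

(* A common bound for the derivatives of all partial compositions. *)
Let W := exp Lam.

Let e_nonneg i : (1 <= i <= n)%nat -> 0 <= e i.
Proof. intros Hi. eapply Rle_trans; [apply Rabs_pos | apply (Hcross i 0 0 Hi); unfold I01; lra]. Qed.

Let comp_d1_le_W k x : (k <= n)%nat -> I01 x ->
  comp_d1 hF hF1 k x <= W /\ comp_d1 hG hG1 k x <= W.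
Proof.
  intros Hk Hx.
  assert (Hl := psum_le l n (nonlin_bound_nonneg _ _ _ _ HnlF) k Hk).
  assert (exp (psum l k) <= W) by (apply exp_le; lra).
  split; eapply Rle_trans; try eassumption.
  - apply (comp_d1_le_exp hF hF1 hF2 n l HF HnlF k Hk x Hx).
  - apply (comp_d1_le_exp hG hG1 hG2 n l HG HnlG k Hk x Hx).
Qed.

(* Gronwall estimate for the distance between the nonlinearities of the
   partial compositions: by additivity of the nonlinearity, the distance
   grows at step k+1 by at most l_{k+1} W times itself plus W e_{k+1}. *)
Lemma comp_nonlin_close k : (k <= n)%nat -> forall x, I01 x ->
  Rabs (nonlin (comp_d1 hF hF1 k) (comp_d2 hF hF1 hF2 k) x
        - nonlin (comp_d1 hG hG1 k) (comp_d2 hG hG1 hG2 k) x)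
  <= W * psum e k * exp (W * psum l k).
Proof.
  induction k as [| k IH]; intros Hk x Hx.
  - unfold nonlin; simpl. replace (0 / 1 - 0 / 1) with 0 by field. rewrite Rabs_R0.
    rewrite Rmult_0_r, Rmult_0_l. lra.
  - assert (UF := iter_comp_unit_diffeo hF hF1 hF2 n HF k ltac:(lia)).
    assert (UG := iter_comp_unit_diffeo hG hG1 hG2 n HG k ltac:(lia)).
    set (eps := W * psum e k * exp (W * psum l k)) in IH.
    assert (Hd1 := d1_close_of_nonlin_close _ _ _ _ _ _ W eps UF UG
                     (fun y Hy => comp_d1_le_W k y ltac:(lia) Hy) (IH ltac:(lia)) x Hx).
    assert (Hu := unit_diffeo_maps _ _ _ UF x Hx).
    assert (Hv := unit_diffeo_maps _ _ _ UG x Hx).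
    destruct UF as [_ [_ [PF _]]]. destruct UG as [_ [_ [PG _]]].
    destruct (HF (S k) ltac:(lia)) as [_ [_ [PF1 _]]].
    destruct (HG (S k) ltac:(lia)) as [_ [_ [PG1 _]]].
    rewrite !comp_nonlin_succ by auto.
    eapply Rle_trans.
    { exact (nonlin_recurrence_bound _ _ _ _ _ _ eps (e (S k)) (l (S k)) W (PF x Hx)
               (proj1 (comp_d1_le_W k x ltac:(lia) Hx)) (IH ltac:(lia) x Hx)
               (Hcross (S k) _ _ ltac:(lia) Hu Hv) (HnlG (S k) _ ltac:(lia) Hv) Hd1). }
    assert (Hl := psum_le l n (nonlin_bound_nonneg _ _ _ _ HnlF) k ltac:(lia)).
    assert (He := psum_le e n e_nonneg k ltac:(lia)).
    pose proof (nonlin_bound_nonneg _ _ _ _ HnlF (S k) ltac:(lia)).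
    pose proof (e_nonneg (S k) ltac:(lia)).
    assert (HW : 0 < W) by apply exp_pos.
    assert (Hg := gronwall_step (W * psum e k) (W * psum l k) (W * l (S k)) (W * e (S k))
                    ltac:(nra) ltac:(nra) ltac:(nra) ltac:(nra)).
    unfold eps. simpl psum.
    replace (W * (psum e k + e (S k))) with (W * psum e k + W * e (S k)) by ring.
    replace (W * (psum l k + l (S k))) with (W * psum l k + W * l (S k)) by ring.
    exact Hg.
Qed.

Lemma compositions_C2_close x : I01 x ->
  let eps := W * Sig * exp (W * Lam) in
  Rabs (iter_comp hF n x - iter_comp hG n x) <= W * eps /\
  Rabs (comp_d1 hF hF1 n x - comp_d1 hG hG1 n x) <= W * eps /\
  Rabs (comp_d2 hF hF1 hF2 n x - comp_d2 hG hG1 hG2 n x) <= (1 + Lam * W) * (W * eps).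
Proof.
  intros Hx eps.
  assert (Hl := psum_le l n (nonlin_bound_nonneg _ _ _ _ HnlF) n (le_n n)).
  assert (He := psum_le e n e_nonneg n (le_n n)).
  assert (HW : 0 < W) by apply exp_pos.
  assert (Heps : forall y, I01 y ->
    Rabs (nonlin (comp_d1 hF hF1 n) (comp_d2 hF hF1 hF2 n) y
          - nonlin (comp_d1 hG hG1 n) (comp_d2 hG hG1 hG2 n) y) <= eps).
  { intros y Hy. eapply Rle_trans; [apply comp_nonlin_close; auto |].
    unfold eps. pose proof (exp_pos (W * psum l n)).
    apply Rmult_le_compat; try nra. apply exp_le. nra. }
  assert (HB : forall y, I01 y ->
    Rabs (nonlin (comp_d1 hG hG1 n) (comp_d2 hG hG1 hG2 n) y) <= Lam * W).
  { intros y Hy. eapply Rle_trans; [apply (comp_nonlin_le hG hG1 hG2 n l HG HnlG n (le_n n) y Hy) |].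
    pose proof (exp_pos (psum l n)).
    apply Rmult_le_compat; try lra. apply exp_le; lra. }
  exact (C2_close_of_nonlin_close _ _ _ _ _ _ W eps (Lam * W)
           (iter_comp_unit_diffeo _ _ _ n HF n (le_n n))
           (iter_comp_unit_diffeo _ _ _ n HG n (le_n n))
           (fun y Hy => comp_d1_le_W n y (le_n n) Hy) Heps HB x Hx).
Qed.

End TwoFamilies.

Lemma zoom_unit_diffeo f f1 f2 a b g1 g2 :
  derive_on I01 f f1 -> derive_on I01 f1 f2 -> (forall x, I01 x -> 0 < f1 x) ->
  0 <= a -> a < b -> b <= 1 ->
  derive_on I01 (zoom a b f) g1 -> derive_on I01 g1 g2 ->
  unit_diffeo (zoom a b f) g1 g2 /\
  forall x, I01 x -> nonlin g1 g2 x = (b - a) * nonlin f1 f2 (A2 a b x).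
Proof.
  intros Hf Hf1 Hp Ha Hab Hb Hg1 Hg2.
  assert (Hfab : f a < f b) by (apply (increasing01 f f1); unfold I01; auto; lra).
  assert (HA : derive_on I01 (A2 a b) (fun _ => b - a)).
  { apply derive_on_global. intros y. unfold A2. auto_derive; auto; ring. }
  assert (HAm : forall x, I01 x -> I01 (A2 a b x)) by (unfold A2, I01; intros; nra).
  set (c := (b - a) / (f b - f a)).
  assert (Hc : 0 < c) by (apply Rdiv_lt_0_compat; lra).
  assert (Hz : derive_on I01 (zoom a b f) (fun x => c * f1 (A2 a b x))).
  { eapply derive_on_ext.
    - apply (derive_on_comp I01 (fun _ => True) _ _ (Defs.A1 (f a) (f b)) (fun _ => / (f b - f a))
               (derive_on_comp _ _ _ _ _ _ HA Hf HAm)); auto.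
      apply derive_on_global. intros y. unfold Defs.A1. auto_derive; [lra | field; lra].
    - auto.
    - intros; simpl. unfold c. field. lra. }
  assert (Hz2 : derive_on I01 (fun x => c * f1 (A2 a b x)) (fun x => c * (f2 (A2 a b x) * (b - a))))
    by (apply derive_on_scal, (derive_on_comp _ _ _ _ _ _ HA Hf1 HAm)).
  assert (E1 : forall x, I01 x -> g1 x = c * f1 (A2 a b x))
    by (intros x Hx; apply (derive_on_unique _ _ _ Hg1 Hz x Hx)).
  assert (E2 : forall x, I01 x -> g2 x = c * (f2 (A2 a b x) * (b - a))).
  { intros x Hx. apply (derive_on_unique g1 g2 (fun x => c * (f2 (A2 a b x) * (b - a))) Hg2);
      auto.
    eapply derive_on_ext; [apply Hz2 | intros; symmetry; auto | auto]. }
  split; [repeat split |].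
  - exact Hg1.
  - exact Hg2.
  - intros x Hx. rewrite E1 by auto. apply Rmult_lt_0_compat; auto.
  - unfold zoom, Defs.A1, A2. replace (a + (b - a) * 0) with a by ring. field. lra.
  - unfold zoom, Defs.A1, A2. replace (a + (b - a) * 1) with b by ring. field. lra.
  - intros x Hx. unfold nonlin. rewrite E1, E2 by auto.
    pose proof (Hp _ (HAm x Hx)). field. lra.
Qed.

Lemma hpow_le t d nu : 0 <= t -> t <= d -> 0 < d -> 0 < nu -> hpow t nu <= Rpower d nu.
Proof.
  intros Ht Htd Hd Hnu. unfold hpow. destruct Rle_dec.
  - unfold Rpower. left; apply exp_pos.
  - apply Rle_Rpower_l; lra.
Qed.

Lemma zoom_nonlin_bounds f1 f2 a b g1 g2 nu C0 C1 :
  0 <= a -> a < b -> b <= 1 -> 0 < nu -> 0 <= C0 ->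
  (forall x y, I01 x -> I01 y ->
     Rabs (nonlin f1 f2 x - nonlin f1 f2 y) <= C0 * hpow (Rabs (x - y)) nu) ->
  (forall x, I01 x -> Rabs (nonlin f1 f2 x) <= C1) ->
  (forall x, I01 x -> nonlin g1 g2 x = (b - a) * nonlin f1 f2 (A2 a b x)) ->
  (forall x, I01 x -> Rabs (nonlin g1 g2 x) <= C1 * (b - a)) /\
  (forall x y, I01 x -> I01 y ->
     Rabs (nonlin g1 g2 x - nonlin g1 g2 y) <= C0 * ((b - a) * Rpower (b - a) nu)).
Proof.
  intros Ha Hab Hb Hnu HC0 Hhol Hsup Hng.
  assert (HAm : forall x, I01 x -> I01 (A2 a b x)) by (unfold A2, I01; intros; nra).
  split.
  - intros x Hx. rewrite Hng, Rabs_mult, Rabs_pos_eq by (auto || lra).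
    rewrite Rmult_comm. apply Rmult_le_compat_r; [lra | auto].
  - intros x y Hx Hy. rewrite !Hng by auto.
    rewrite <- Rmult_minus_distr_l, Rabs_mult, (Rabs_pos_eq (b - a)) by lra.
    assert (Hd : Rabs (A2 a b x - A2 a b y) <= b - a).
    { unfold A2. replace (a + (b - a) * x - (a + (b - a) * y)) with ((b - a) * (x - y)) by ring.
      rewrite Rabs_mult, Rabs_pos_eq by lra.
      assert (Rabs (x - y) <= 1) by (unfold I01 in *; unfold Rabs; destruct Rcase_abs; lra).
      pose proof (Rabs_pos (x - y)). nra. }
    assert (Hh := hpow_le _ (b - a) nu (Rabs_pos _) Hd ltac:(lra) Hnu).
    assert (E := Hhol _ _ (HAm x Hx) (HAm y Hy)).
    assert (C0 * hpow (Rabs (A2 a b x - A2 a b y)) nu <= C0 * Rpower (b - a) nu)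
      by (apply Rmult_le_compat_l; auto).
    replace (C0 * ((b - a) * Rpower (b - a) nu)) with ((b - a) * (C0 * Rpower (b - a) nu)) by ring.
    apply Rmult_le_compat_l; lra.
Qed.

Lemma RiemannInt01_near phi (pr : Riemann_integrable phi 0 1) v K :
  (forall t, I01 t -> Rabs (phi t - v) <= K) -> Rabs (RiemannInt pr - v) <= K.
Proof.
  intros H.
  destruct (RiemannInt_const_bound (l := v - K) (u := v + K) pr ltac:(lra)) as [E1 E2].
  - intros t Ht. assert (Hb := H t ltac:(unfold I01; lra)).
    unfold Rabs in Hb; destruct Rcase_abs in Hb; lra.
  - unfold Rabs; destruct Rcase_abs; lra.
Qed.

Definition Mob_d1 (N x : R) : R :=
  exp (- N / 2) / ((1 + x * (exp (- N / 2) - 1)) ^ 2).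
Definition Mob_d2 (N x : R) : R :=
  -2 * (exp (- N / 2) - 1) * exp (- N / 2) / ((1 + x * (exp (- N / 2) - 1)) ^ 3).

Lemma Mob_denom_ge t x : I01 x -> exp (- Rabs t) <= 1 + x * (exp t - 1).
Proof.
  intros Hx.
  assert (H1 : exp (- Rabs t) <= 1).
  { rewrite <- exp_0. apply exp_le. pose proof (Rabs_pos t); lra. }
  assert (H2 : exp (- Rabs t) <= exp t).
  { apply exp_le. unfold Rabs; destruct Rcase_abs; lra. }
  unfold I01 in Hx. nra.
Qed.

Lemma Mob_unit_diffeo N : unit_diffeo (Mob N) (Mob_d1 N) (Mob_d2 N).
Proof.
  pose proof (exp_pos (- N / 2)). pose proof (exp_pos (- Rabs (- N / 2))).
  repeat split.
  - apply derive_on_of_pt_lim. intros x Hx. assert (Hd := Mob_denom_ge (- N / 2) x Hx).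
    apply is_derive_Reals. unfold Mob, Mob_d1. auto_derive; [lra | field; lra].
  - apply derive_on_of_pt_lim. intros x Hx. assert (Hd := Mob_denom_ge (- N / 2) x Hx).
    apply is_derive_Reals. unfold Mob_d1, Mob_d2. auto_derive.
    + apply Rmult_integral_contrapositive; split; [| rewrite Rmult_1_r]; lra.
    + field. lra.
  - intros x Hx. assert (Hd := Mob_denom_ge (- N / 2) x Hx).
    unfold Mob_d1. apply Rdiv_lt_0_compat; auto. apply pow_lt. lra.
  - unfold Mob. rewrite !Rmult_0_l. unfold Rdiv. ring.
  - unfold Mob. rewrite !Rmult_1_l. field. lra.
Qed.

Lemma exp_taylor_bounds t : Rabs (exp t - 1) <= Rabs t * exp (Rabs t) /\
  Rabs (exp t - 1 - t) <= t * t * exp (Rabs t).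
Proof.
  assert (HA := exp_ineq1_le t). assert (HB := exp_ineq1_le (- t)).
  assert (HAB : exp t * exp (- t) = 1)
    by (rewrite <- exp_plus; replace (t + - t) with 0 by ring; apply exp_0).
  pose proof (exp_pos t). pose proof (exp_pos (- t)).
  destruct (Rle_dec 0 t).
  - rewrite (Rabs_pos_eq t) by lra.
    assert (exp t - 1 <= t * exp t) by nra.
    rewrite !Rabs_pos_eq by nra. split; nra.
  - rewrite (Rabs_left t) by lra.
    assert (1 - exp t <= - t) by nra.
    assert (exp t - 1 - t <= - t * (1 - exp t)) by nra.
    rewrite (Rabs_left (exp t - 1)), (Rabs_pos_eq (exp t - 1 - t)) by nra.
    split; nra.
Qed.

Lemma Mob_nonlin_eq N x : I01 x ->
  nonlin (Mob_d1 N) (Mob_d2 N) x = -2 * (exp (- N / 2) - 1) / (1 + x * (exp (- N / 2) - 1)).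
Proof.
  intros Hx. assert (Hd := Mob_denom_ge (- N / 2) x Hx).
  pose proof (exp_pos (- Rabs (- N / 2))). pose proof (exp_pos (- N / 2)).
  unfold nonlin, Mob_d1, Mob_d2. field. split; lra.
Qed.

(* With t = -N/2 and D the denominator,
   it equals -2 (e^t - 1) / D, and -2 (e^t - 1) / D - N =
   (-2 (e^t - 1 - t) + 2 t x (e^t - 1)) / D. *)
Lemma Mob_nonlin_bounds N x : I01 x ->
  Rabs (nonlin (Mob_d1 N) (Mob_d2 N) x) <= Rabs N * exp (Rabs N) /\
  Rabs (nonlin (Mob_d1 N) (Mob_d2 N) x - N) <= N * N * exp (Rabs N).
Proof.
  intros Hx. rewrite Mob_nonlin_eq by auto.
  assert (Hd := Mob_denom_ge (- N / 2) x Hx).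
  set (t := - N / 2) in *. set (D := 1 + x * (exp t - 1)) in *.
  assert (HN : N = -2 * t) by (unfold t; field).
  assert (HaN : Rabs N = 2 * Rabs t)
    by (rewrite HN, Rabs_mult; f_equal; unfold Rabs; destruct Rcase_abs; lra).
  destruct (exp_taylor_bounds t) as [B1 B2].
  pose proof (exp_pos (- Rabs t)). pose proof (exp_pos (Rabs t)). pose proof (Rabs_pos t).
  assert (HD0 : 0 < D) by lra.
  assert (HDdef : D = 1 + x * (exp t - 1)) by reflexivity.
  assert (Hinv : / D <= exp (Rabs t)).
  { rewrite <- (Rinv_inv (exp (Rabs t))), <- exp_Ropp. apply Rinv_le_contravar; auto. }
  assert (Hid : 0 < / D) by (apply Rinv_0_lt_compat; lra).
  assert (Hexp2 : exp (Rabs N) = exp (Rabs t) * exp (Rabs t))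
    by (rewrite <- exp_plus; f_equal; lra).
  assert (Habs2 : Rabs (-2) = 2) by (unfold Rabs; destruct Rcase_abs; lra).
  pose proof (Rabs_pos (exp t - 1)). pose proof (Rabs_pos (exp t - 1 - t)).
  rewrite Hexp2. unfold Rdiv. split.
  - rewrite !Rabs_mult, Habs2, (Rabs_pos_eq (/ D)), HaN by lra.
    apply Rle_trans with (2 * (Rabs t * exp (Rabs t)) * exp (Rabs t));
      [apply Rmult_le_compat; nra | nra].
  - replace (-2 * (exp t - 1) * / D - N) with
      ((-2 * (exp t - 1 - t) + (2 * t) * (x * (exp t - 1))) * / D)
      by (rewrite HN; rewrite HDdef in HD0 |- *; field; lra).
    rewrite Rabs_mult, (Rabs_pos_eq (/ D)) by lra.
    assert (Hn : Rabs (-2 * (exp t - 1 - t) + 2 * t * (x * (exp t - 1)))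
                 <= 4 * (t * t) * exp (Rabs t)).
    { eapply Rle_trans; [apply Rabs_triang |]. rewrite !Rabs_mult, Habs2.
      rewrite (Rabs_pos_eq x), (Rabs_pos_eq 2) by (unfold I01 in *; lra).
      assert (Rabs t * Rabs t = t * t) by (rewrite <- Rabs_mult; apply Rabs_pos_eq; nra).
      assert (x * Rabs (exp t - 1) <= Rabs t * exp (Rabs t)).
      { unfold I01 in Hx. apply Rle_trans with (1 * Rabs (exp t - 1)); [| lra].
        apply Rmult_le_compat_r; lra. }
      assert (Rabs t * (x * Rabs (exp t - 1)) <= Rabs t * (Rabs t * exp (Rabs t)))
        by (apply Rmult_le_compat_l; lra).
      nra. }
    rewrite HN.
    apply Rle_trans with (4 * (t * t) * exp (Rabs t) * exp (Rabs t));
      [apply Rmult_le_compat; try nra; apply Rabs_pos | nra].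
Qed.

Lemma le_Rpower_nu d nu : 0 < d -> d <= 1 -> 0 < nu -> nu <= 1 -> d <= Rpower d nu.
Proof.
  intros. unfold Rpower. rewrite <- (exp_ln d) at 1 by auto. apply exp_le.
  assert (ln d <= 0) by (rewrite <- ln_1; apply ln_le; lra). nra.
Qed.

Lemma Mob_nonlin_scaled Nv C1 d nu : 0 <= C1 -> 0 < d -> d <= 1 -> 0 < nu -> nu <= 1 ->
  Rabs Nv <= C1 * d -> forall x, I01 x ->
  Rabs (nonlin (Mob_d1 Nv) (Mob_d2 Nv) x) <= C1 * exp C1 * d /\
  Rabs (nonlin (Mob_d1 Nv) (Mob_d2 Nv) x - Nv) <= C1 * C1 * exp C1 * (d * Rpower d nu).
Proof.
  intros HC1 Hd Hd1 Hnu Hnu1 HN x Hx.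
  destruct (Mob_nonlin_bounds Nv x Hx) as [B1 B2].
  assert (Hexp : exp (Rabs Nv) <= exp C1) by (apply exp_le; nra).
  pose proof (Rabs_pos Nv). pose proof (exp_pos (Rabs Nv)).
  assert (Hsq : Nv * Nv <= C1 * d * (C1 * d)).
  { rewrite <- (Rabs_pos_eq (Nv * Nv)) by nra. rewrite Rabs_mult.
    apply Rmult_le_compat; lra. }
  assert (Hdd : d * d <= d * Rpower d nu)
    by (apply Rmult_le_compat_l; [lra | apply le_Rpower_nu; auto]).
  split.
  - eapply Rle_trans; [exact B1 |].
    apply Rle_trans with (C1 * d * exp C1); [apply Rmult_le_compat; lra | nra].
  - eapply Rle_trans; [exact B2 |].
    apply Rle_trans with (C1 * d * (C1 * d) * exp C1); [apply Rmult_le_compat; nra |].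
    replace (C1 * d * (C1 * d) * exp C1) with ((C1 * C1 * exp C1) * (d * d)) by ring.
    apply Rmult_le_compat_l; [| lra]. pose proof (exp_pos C1). nra.
Qed.

Lemma zoom_vs_mobius nu C0 C1 f f1 f2 a b g1 g2 Nv :
  0 < nu -> nu <= 1 -> 0 < C0 -> 0 < C1 ->
  deriv01 f f1 -> deriv01 f1 f2 -> (forall x, I01 x -> 0 < f1 x) ->
  (forall x y, I01 x -> I01 y ->
     Rabs (nonlin f1 f2 x - nonlin f1 f2 y) <= C0 * hpow (Rabs (x - y)) nu) ->
  (forall x, I01 x -> Rabs (nonlin f1 f2 x) <= C1) ->
  0 <= a -> a < b -> b <= 1 ->
  deriv01 (zoom a b f) g1 -> deriv01 g1 g2 ->
  (exists pr : Riemann_integrable (nonlin g1 g2) 0 1, RiemannInt pr = Nv) ->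
  unit_diffeo (zoom a b f) g1 g2 /\
  (forall x, I01 x -> Rabs (nonlin g1 g2 x) <= C1 * exp C1 * (b - a)) /\
  (forall x, I01 x -> Rabs (nonlin (Mob_d1 Nv) (Mob_d2 Nv) x) <= C1 * exp C1 * (b - a)) /\
  (forall u v, I01 u -> I01 v ->
     Rabs (nonlin g1 g2 u - nonlin (Mob_d1 Nv) (Mob_d2 Nv) v)
     <= (C0 + C1 * C1 * exp C1) * ((b - a) * Rpower (b - a) nu)).
Proof.
  intros Hnu Hnu1 HC0 HC1 Hf Hf1 Hp Hhol Hsup Ha Hab Hb Hg1 Hg2 [pr Hpr].
  destruct (zoom_unit_diffeo f f1 f2 a b g1 g2 (deriv01_derive_on _ _ Hf)
              (deriv01_derive_on _ _ Hf1) Hp Ha Hab Hb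
              (deriv01_derive_on _ _ Hg1) (deriv01_derive_on _ _ Hg2)) as [Hunit Hng].
  destruct (zoom_nonlin_bounds f1 f2 a b g1 g2 nu C0 C1 Ha Hab Hb Hnu ltac:(lra)
              Hhol Hsup Hng) as [Hsize Hosc].
  set (d := b - a) in *.
  assert (HN : Rabs Nv <= C1 * d).
  { rewrite <- Hpr, <- (Rminus_0_r (RiemannInt pr)).
    apply RiemannInt01_near. intros t Ht. rewrite Rminus_0_r. auto. }
  assert (HgN : forall u, I01 u -> Rabs (nonlin g1 g2 u - Nv) <= C0 * (d * Rpower d nu)).
  { intros u Hu. rewrite <- Hpr, Rabs_minus_sym.
    apply RiemannInt01_near. intros t Ht. auto. }
  assert (HM := Mob_nonlin_scaled Nv C1 d nu ltac:(lra) ltac:(unfold d; lra)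
                  ltac:(unfold d; lra) Hnu Hnu1 HN).
  assert (HE : 1 <= exp C1) by (rewrite <- exp_0; apply exp_le; lra).
  split; [exact Hunit | split; [| split]].
  - intros x Hx. eapply Rle_trans; [apply Hsize; auto |].
    assert (0 < d) by (unfold d; lra).
    replace (C1 * exp C1 * d) with (C1 * d * exp C1) by ring.
    apply Rle_trans with (C1 * d * 1); [lra | apply Rmult_le_compat_l; nra].
  - intros x Hx. apply (HM x Hx).
  - intros u v Hu Hv.
    replace (nonlin g1 g2 u - nonlin (Mob_d1 Nv) (Mob_d2 Nv) v) with
      ((nonlin g1 g2 u - Nv) - (nonlin (Mob_d1 Nv) (Mob_d2 Nv) v - Nv)) by ring.
    eapply Rle_trans; [apply Rabs_triang |]. rewrite Rabs_Ropp.
    assert (E1 := HgN u Hu). destruct (HM v Hv) as [_ E2]. lra.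
Qed.

Lemma maxseq_ge d n i : (1 <= i <= n)%nat -> d i <= maxseq d n.
Proof.
  induction n as [| n IH]; intros Hi; [lia |]. simpl.
  destruct (Nat.eq_dec i (S n)) as [-> | Hne]; [apply Rmax_r |].
  eapply Rle_trans; [apply IH; lia | apply Rmax_l].
Qed.

Lemma Rpower_le_maxseq d n i nu : 0 <= nu -> (1 <= i <= n)%nat -> 0 < d i ->
  Rpower (d i) nu <= Rpower (maxseq d n) nu.
Proof. intros Hnu Hi Hd. apply Rle_Rpower_l; [lra | split; [lra | apply maxseq_ge; auto]]. Qed.

Lemma zoom_and_mobius_families nu C0 C1 (f f1 f2 : nat -> R -> R) n (a b : nat -> R)
  (g1 g2 : nat -> R -> R) (N : nat -> R) :
  0 < nu -> nu <= 1 -> 0 < C0 -> 0 < C1 ->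
  (forall i, deriv01 (f i) (f1 i)) -> (forall i, deriv01 (f1 i) (f2 i)) ->
  (forall i x, I01 x -> 0 < f1 i x) ->
  (forall i x y, I01 x -> I01 y ->
     Rabs (nonlin (f1 i) (f2 i) x - nonlin (f1 i) (f2 i) y) <= C0 * hpow (Rabs (x - y)) nu) ->
  (forall i x, I01 x -> Rabs (nonlin (f1 i) (f2 i) x) <= C1) ->
  (forall i, (1 <= i <= n)%nat -> 0 <= a i /\ a i < b i /\ b i <= 1) ->
  (forall i, (1 <= i <= n)%nat -> deriv01 (zoom (a i) (b i) (f i)) (g1 i)) ->
  (forall i, (1 <= i <= n)%nat -> deriv01 (g1 i) (g2 i)) ->
  (forall i, (1 <= i <= n)%nat ->
     exists pr : Riemann_integrable (nonlin (g1 i) (g2 i)) 0 1, RiemannInt pr = N i) ->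
  let d := fun j => b j - a j in
  let m := Rpower (maxseq d n) nu in
  unit_diffeos (fun i => zoom (a i) (b i) (f i)) g1 g2 n /\
  unit_diffeos (fun i => Mob (N i)) (fun i => Mob_d1 (N i)) (fun i => Mob_d2 (N i)) n /\
  (forall i x, (1 <= i <= n)%nat -> I01 x ->
     Rabs (nonlin (g1 i) (g2 i) x) <= C1 * exp C1 * d i) /\
  (forall i x, (1 <= i <= n)%nat -> I01 x ->
     Rabs (nonlin (Mob_d1 (N i)) (Mob_d2 (N i)) x) <= C1 * exp C1 * d i) /\
  (forall i u v, (1 <= i <= n)%nat -> I01 u -> I01 v ->
     Rabs (nonlin (g1 i) (g2 i) u - nonlin (Mob_d1 (N i)) (Mob_d2 (N i)) v)
     <= (C0 + C1 * C1 * exp C1) * m * d i).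
Proof.
  intros Hnu Hnu1 HC0 HC1 Hd1 Hd2 Hpos Hhol Hsup Hab Hg1 Hg2 HN d m.
  pose proof (fun i (Hi : (1 <= i <= n)%nat) =>
    zoom_vs_mobius nu C0 C1 (f i) (f1 i) (f2 i) (a i) (b i) (g1 i) (g2 i) (N i)
      Hnu Hnu1 HC0 HC1 (Hd1 i) (Hd2 i) (Hpos i) (Hhol i) (Hsup i) (proj1 (Hab i Hi))
      (proj1 (proj2 (Hab i Hi))) (proj2 (proj2 (Hab i Hi))) (Hg1 i Hi) (Hg2 i Hi) (HN i Hi))
    as Hloc.
  split; [intros i Hi; apply (Hloc i Hi) |].
  split; [intros i Hi; apply Mob_unit_diffeo |].
  split; [intros i x Hi Hx; apply (Hloc i Hi); auto |].
  split; [intros i x Hi Hx; apply (Hloc i Hi); auto |].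
  intros i u v Hi Hu Hv. eapply Rle_trans; [apply (Hloc i Hi); auto |].
  assert (Hdi : 0 < d i) by (unfold d; destruct (Hab i Hi); lra).
  assert (Hdm := Rpower_le_maxseq d n i nu ltac:(lra) Hi Hdi). fold m in Hdm.
  change (b i - a i) with (d i).
  assert (HKa : 0 < C0 + C1 * C1 * exp C1) by (pose proof (exp_pos C1); nra).
  replace ((C0 + C1 * C1 * exp C1) * m * d i) with ((C0 + C1 * C1 * exp C1) * (d i * m))
    by ring.
  apply Rmult_le_compat_l; [lra |]. apply Rmult_le_compat_l; lra.
Qed.

Lemma sup01_exists h B : (forall x, I01 x -> Rabs (h x) <= B) ->
  exists s, sup01 h s /\ s <= B.
Proof.
  intros HB.
  set (E := fun y => exists x, 0 <= x <= 1 /\ y = Rabs (h x)).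
  assert (Hb : bound E) by (exists B; intros y [x [Hx ->]]; apply HB; auto).
  assert (Hne : exists y, E y) by (exists (Rabs (h 0)); exists 0; split; [lra | auto]).
  destruct (completeness E Hb Hne) as [s Hs].
  exists s. split; [exact Hs |]. apply Hs. intros y [x [Hx ->]]. apply HB; auto.
Qed.

(* Pointwise C^2 estimates between two maps, given by computed derivatives,
   yield the same bound on d_{C^2} for any other description of the
   derivatives (they coincide on [0,1]). *)
Lemma dC2_le P P1 P2 Q Q1 Q2 F1 F2 G1 G2 b0 b1 b2 :
  derive_on I01 P P1 -> derive_on I01 P1 P2 ->
  derive_on I01 Q Q1 -> derive_on I01 Q1 Q2 ->
  deriv01 P F1 -> deriv01 F1 F2 -> deriv01 Q G1 -> deriv01 G1 G2 ->
  (forall x, I01 x -> Rabs (P x - Q x) <= b0 /\ Rabs (P1 x - Q1 x) <= b1 /\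
                      Rabs (P2 x - Q2 x) <= b2) ->
  exists d, dC2 P F1 F2 Q G1 G2 d /\ d <= b0 + b1 + b2.
Proof.
  intros DP DP1 DQ DQ1 HF1 HF2 HG1 HG2 Hb.
  assert (Agree : forall g g1 g2 h1 h2, derive_on I01 g g1 -> derive_on I01 g1 g2 ->
            deriv01 g h1 -> deriv01 h1 h2 -> forall x, I01 x -> h1 x = g1 x /\ h2 x = g2 x).
  { intros g g1 g2 h1 h2 D1 D2 E1 E2.
    assert (Hh1 := derive_on_unique _ _ _ (deriv01_derive_on _ _ E1) D1).
    split; [auto |]. apply (derive_on_unique h1 h2 g2 (deriv01_derive_on _ _ E2)); auto.
    eapply derive_on_ext; [exact D2 | intros; symmetry; auto | auto]. }
  destruct (sup01_exists (fun x => P x - Q x) b0) as [s0 [Hs0 Hs0b]].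
  { intros x Hx. apply (Hb x Hx). }
  destruct (sup01_exists (fun x => F1 x - G1 x) b1) as [s1 [Hs1 Hs1b]].
  { intros x Hx. destruct (Agree _ _ _ _ _ DP DP1 HF1 HF2 x Hx) as [-> _].
    destruct (Agree _ _ _ _ _ DQ DQ1 HG1 HG2 x Hx) as [-> _]. apply (Hb x Hx). }
  destruct (sup01_exists (fun x => F2 x - G2 x) b2) as [s2 [Hs2 Hs2b]].
  { intros x Hx. destruct (Agree _ _ _ _ _ DP DP1 HF1 HF2 x Hx) as [_ ->].
    destruct (Agree _ _ _ _ _ DQ DQ1 HG1 HG2 x Hx) as [_ ->]. apply (Hb x Hx). }
  exists (s0 + s1 + s2). split; [exists s0, s1, s2; auto | lra].
Qed.

Theorem proposition2p3
  (nu C0 C1 : R) (f f1 f2 : nat -> R -> R)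
  (Hnu : 0 < nu) (Hnu1 : nu <= 1) (HC0 : 0 < C0) (HC1 : 0 < C1)
  (* each f_i is an orientation-preserving C^{2+nu} diffeomorphism of [0,1] *)
  (Hd1 : forall i, deriv01 (f i) (f1 i))
  (Hd2 : forall i, deriv01 (f1 i) (f2 i))
  (Hhol2 : forall i, exists K, forall x y, 0 <= x <= 1 -> 0 <= y <= 1 ->
             Rabs (f2 i x - f2 i y) <= K * hpow (Rabs (x - y)) nu)
  (Hpos : forall i x, 0 <= x <= 1 -> 0 < f1 i x)
  (H0 : forall i, f i 0 = 0) (H1 : forall i, f i 1 = 1)
  (* uniform Hoelder bound and sup bound on the nonlinearities *)
  (Hn : forall i x y, 0 <= x <= 1 -> 0 <= y <= 1 ->
          Rabs (nonlin (f1 i) (f2 i) x - nonlin (f1 i) (f2 i) y)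
            <= C0 * hpow (Rabs (x - y)) nu)
  (Hsup : forall i x, 0 <= x <= 1 -> Rabs (nonlin (f1 i) (f2 i) x) <= C1) :
  forall C2 : R, 0 < C2 ->
  exists C3 : R, 0 < C3 /\
  forall (n : nat) (a b : nat -> R),
    (1 <= n)%nat ->
    (forall i, (1 <= i <= n)%nat -> 0 <= a i /\ a i < b i /\ b i <= 1) ->
    sum_f_R0 (fun k => b (S k) - a (S k)) (n - 1) <= C2 ->
    (* derivatives of the zoomed maps ft_i = Z_{[a_i,b_i]}(f_i) *)
    forall (g1 g2 : nat -> R -> R),
    (forall i, (1 <= i <= n)%nat -> deriv01 (zoom (a i) (b i) (f i)) (g1 i)) ->
    (forall i, (1 <= i <= n)%nat -> deriv01 (g1 i) (g2 i)) ->
    (* N i = N_{ft_i} = int_0^1 n_{ft_i} *)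
    forall (N : nat -> R),
    (forall i, (1 <= i <= n)%nat ->
       exists pr : Riemann_integrable (nonlin (g1 i) (g2 i)) 0 1,
         RiemannInt pr = N i) ->
    (* derivatives of the compositions *)
    forall (F1 F2 G1 G2 : R -> R),
    deriv01 (iter_comp (fun i => zoom (a i) (b i) (f i)) n) F1 ->
    deriv01 F1 F2 ->
    deriv01 (iter_comp (fun i => Mob (N i)) n) G1 ->
    deriv01 G1 G2 ->
    exists d,
      dC2 (iter_comp (fun i => zoom (a i) (b i) (f i)) n) F1 F2
          (iter_comp (fun i => Mob (N i)) n) G1 G2 d /\
      d <= C3 * Rpower (maxseq (fun j => b j - a j) n) nu.
Proof.
  intros C2 HC2.
  set (L := C1 * exp C1). set (Ka := C0 + C1 * C1 * exp C1).
  set (Lam := L * C2). set (W := exp Lam).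
  assert (HL : 0 < L) by (apply Rmult_lt_0_compat; auto using exp_pos).
  assert (HKa : 0 < Ka) by (unfold Ka; pose proof (exp_pos C1); nra).
  assert (HLam : 0 < Lam) by (apply Rmult_lt_0_compat; lra).
  assert (HW : 0 < W) by apply exp_pos.
  exists ((3 + Lam * W) * W * W * (Ka * C2) * exp (W * Lam)). split.
  { pose proof (exp_pos (W * Lam)). repeat apply Rmult_lt_0_compat; nra. }
  intros n a b Hn1 Hab Hsum g1 g2 Hg1 Hg2 N HN F1 F2 G1 G2 HF1 HF2 HG1 HG2.
  set (d := fun j => b j - a j). set (m := Rpower (maxseq d n) nu).
  assert (Hm : 0 < m) by apply exp_pos.
  destruct (zoom_and_mobius_families nu C0 C1 f f1 f2 n a b g1 g2 N Hnu Hnu1 HC0 HC1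
              Hd1 Hd2 Hpos Hn Hsup Hab Hg1 Hg2 HN) as [HF [HG [HnlF [HnlG Hcross]]]].
  assert (Hdsum : psum d n <= C2).
  { replace n with (S (n - 1)) by lia. rewrite psum_sum_f_R0. exact Hsum. }
  assert (Hlam : psum (fun i => L * d i) n <= Lam)
    by (rewrite psum_scal; apply Rmult_le_compat_l; lra).
  assert (Hsig : psum (fun i => Ka * m * d i) n <= Ka * m * C2)
    by (rewrite psum_scal; apply Rmult_le_compat_l; nra).
  assert (Hclose := compositions_C2_close _ _ _ _ _ _ n _ _ Lam (Ka * m * C2)
                      HF HG HnlF HnlG Hcross Hlam Hsig).
  destruct (iter_comp_unit_diffeo _ _ _ n HF n (le_n n)) as [DP [DP1 _]].
  destruct (iter_comp_unit_diffeo _ _ _ n HG n (le_n n)) as [DQ [DQ1 _]].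
  destruct (dC2_le _ _ _ _ _ _ F1 F2 G1 G2 _ _ _ DP DP1 DQ DQ1 HF1 HF2 HG1 HG2 Hclose)
    as [dist [Hdist Hle]].
  exists dist. split; [exact Hdist |]. eapply Rle_trans; [exact Hle |]. right. fold W. ring.
Qed.
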